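(* For every finite game $G$, $\mathcal{X}^{CCE}\subseteq\mathcal{X}^{S\text{-}NF}$; that is, for every coarse correlated equilibrium $x$ of $G$ there exists a stable $\mathbf{x}=[x_\pi]$ of the Stackelberg game $(G,N,\emptyset)$ with $x_\varnothing=x$.
   Context: A finite game is $G=(N,\{S_p\}_{p\in N},\{u_p\}_{p\in N})$ with players $N=\{1,\dots,n\}$, finite nonempty strategy sets $S_p$, and utilities $u_p:S\to\mathbb{R}$ on $S=\prod_{p\in N}S_p$; write $s=(s_p,s_{-p})$ with $s_{-p}\in S_{-p}=\prod_{q\neq p}S_q$. $\mathcal{X}=\Delta(S)$ is the set of probability distributions on $S$ and $u_p(x)=\sum_{s\in S}x(s)u_p(s)$ for $x\in\mathcal{X}$. For $P\subseteq N$, $\mathcal{X}^{CE}_P$ is the set of $x\in\mathcal{X}$ such that for every $p\in P$ and all $s_p\neq s_p'\in S_p$: $\sum_{s_{-p}\in S_{-p}} x(s_p,s_{-p})\,(u_p(s_p,s_{-p})-u_p(s_p',s_{-p}))\ge 0$; $\mathcal{X}^{CE}=\mathcal{X}^{CE}_N$ is the set of correlated equilibria of $G$. $\mathcal{X}^{CCE}$ is the set of coarse correlated equilibria of $G$: $x\in\mathcal{X}$ with $\sum_{s\in S}x(s)(u_p(s)-u_p(s_p',s_{-p}))\ge 0$ for all $p\in N$, $s_p'\in S_p$. A Stackelberg game (SG) is a triple $(G,L,F)$ with $L\cup F=N$ and $L\cap F=\emptyset$ (leaders and followers). For $P\subseteq N$, $\Pi_P$ is the set of ordered subsets of $P$ (finite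 sequences of pairwise distinct elements of $P$, including the empty sequence $\varnothing$); for $\pi\in\Pi_P$ and $p\in P$ not occurring in $\pi$, $\pi p$ is $\pi$ with $p$ appended; when used as a set, $\pi$ means its set of entries. $\mathbf{X}=\prod_{\pi\in\Pi_L}\mathcal{X}^{CE}_{\pi\cup F}$, with elements $\mathbf{x}=[x_\pi]_{\pi\in\Pi_L}$. For $\mathbf{x}\in\mathbf{X}$ and $\pi\in\Pi_L$, $x_\pi$ is stable if $u_p(x_\pi)\ge u_p(x_{\pi p})$ for all $p\in L\setminus\pi$; $\mathbf{x}$ is stable if $x_\varnothing$ is stable, and perfectly stable if $x_\pi$ is stable for every $\pi\in\Pi_L$; $\mathbf{X}^{S}$ and $\mathbf{X}^{PS}$ denote the sets of stable and perfectly stable elements of $\mathbf{X}$. $\mathcal{X}^{S\text{-}NF}=\{x_\varnothing:\mathbf{x}\in\mathbf{X}^S\}$ computed for the SG $(G,N,\emptyset)$ in which every player is a leader. *)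

From HB Require Import structures.
From mathcomp Require Import all_boot all_order all_algebra.
Set Implicit Arguments. Unset Strict Implicit. Unset Printing Implicit Defensive.
Import Order.TTheory GRing.Theory Num.Theory.
Local Open Scope ring_scope.

(* A finite game: players 'I_n, strategy sets S p (finite types),
   utilities u p : profile -> R. *)

Definition profile (n : nat) (S : 'I_n -> finType) : finType :=
  {dffun forall p : 'I_n, S p}.

Definition dev (n : nat) (S : 'I_n -> finType) (s : profile S) (p : 'I_n)
  (t : S p) : profile S :=
  [ffun q => @dfwith _ (fun q => S q) s p t q].

Definition is_dist (R : realFieldType) (n : nat) (S : 'I_n -> finType)
  (x : profile S -> R) : Prop :=
  (forall s, 0 <= x s) /\ \sum_(s : profile S) x s = 1.

Definition EU (R : realFieldType) (n : nat) (S : 'I_n -> finType)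
  (u : 'I_n -> profile S -> R) (p : 'I_n) (x : profile S -> R) : R :=
  \sum_(s : profile S) x s * u p s.

(* x in X^CE_P. The sum over s_{-p} of x(s_p,s_{-p})(...) is written as the
   sum over profiles s with s p = s_p. *)
Definition inCE_P (R : realFieldType) (n : nat) (S : 'I_n -> finType)
  (u : 'I_n -> profile S -> R) (P : {set 'I_n}) (x : profile S -> R) : Prop :=
  is_dist x /\
  forall p : 'I_n, p \in P -> forall a a' : S p, a != a' ->
    0 <= \sum_(s : profile S | s p == a) x s * (u p s - u p (dev s a')).

Definition inCCE (R : realFieldType) (n : nat) (S : 'I_n -> finType)
  (u : 'I_n -> profile S -> R) (x : profile S -> R) : Prop :=
  is_dist x /\
  forall (p : 'I_n) (a' : S p),
    0 <= \sum_(s : profile S) x s * (u p s - u p (dev s a')).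

(* Stackelberg game (G, L, F) with F = N \ L.  Ordered subsets of L are
   duplicate-free sequences with entries in L; a family xs assigns a
   distribution to each sequence (values at other sequences are irrelevant).
   bold x in bold X : *)
Definition inX (R : realFieldType) (n : nat) (S : 'I_n -> finType)
  (u : 'I_n -> profile S -> R) (L : {set 'I_n})
  (xs : seq 'I_n -> profile S -> R) : Prop :=
  forall pi : seq 'I_n, uniq pi -> {subset pi <= L} ->
    inCE_P u ([set q in pi] :|: ~: L) (xs pi).

Definition stable_at (R : realFieldType) (n : nat) (S : 'I_n -> finType)
  (u : 'I_n -> profile S -> R) (L : {set 'I_n})
  (xs : seq 'I_n -> profile S -> R) (pi : seq 'I_n) : Prop :=
  forall p : 'I_n, p \in L -> p \notin pi ->
    EU u p (xs (rcons pi p)) <= EU u p (xs pi).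

Definition stableX (R : realFieldType) (n : nat) (S : 'I_n -> finType)
  (u : 'I_n -> profile S -> R) (L : {set 'I_n})
  (xs : seq 'I_n -> profile S -> R) : Prop :=
  inX u L xs /\ stable_at u L xs [::].

Definition inSNF (R : realFieldType) (n : nat) (S : 'I_n -> finType)
  (u : 'I_n -> profile S -> R) (x : profile S -> R) : Prop :=
  exists xs : seq 'I_n -> profile S -> R,
    stableX u [set: 'I_n] xs /\ xs [::] = x.

(* We build a stable family [x_pi] with x_[::] = x:
   - x_[::] = x; it only has to be a distribution;
   - x_[p] is x after player p commits to a strategy a_p maximising the payoff
     of such a commitment.  Since p then always plays a_p, the only switch of
     p is away from a_p, and it cannot help by maximality: x_[p] is a
     correlated equilibrium for p.  Stability of x_[::] against p is exactly
     the CCE inequality for the deviation a_p;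
   - every longer sequence gets a correlated equilibrium of the whole game.
   The existence of correlated equilibria is proved following Hart and
   Schmeidler: Farkas' lemma (by Fourier-Motzkin elimination) gives Ville's
   theorem of the alternative and stationary distributions of nonnegative
   rate matrices; a product of stationary mixed strategies then averages
   every weighted swap gain to zero, which is the dual condition of Ville's
   theorem for the correlated-equilibrium inequalities. *)

From HB Require Import structures.
From mathcomp Require Import all_boot all_order all_algebra.
From mathcomp Require Import ring lra.
Import Order.TTheory GRing.Theory Num.Theory.
Local Open Scope ring_scope.

Section LinearInequalities.
Set Implicit Arguments. Unset Strict Implicit. Unset Printing Implicit Defensive.

Variable R : realFieldType.

Definition is_prob (T : finType) (x : T -> R) : Prop :=
  (forall t, 0 <= x t) /\ \sum_t x t = 1.

Lemma sum_indicator (I : finType) (p : I) (f : I -> R) :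
  \sum_i (i == p)%:R * f i = f p.
Proof.
by rewrite (bigD1 p) //= eqxx mul1r big1 ?addr0 // => i /negbTE ->; rewrite mul0r.
Qed.

Lemma sum_comb (I J : finType) (l : J -> R) (w : J -> I -> R) (f : I -> R) :
  \sum_i (\sum_j l j * w j i) * f i = \sum_j l j * \sum_i w j i * f i.
Proof.
under eq_bigr do rewrite mulr_suml.
rewrite exchange_big; apply: eq_bigr => j _; rewrite mulr_sumr.
by apply: eq_bigr => i _; rewrite mulrA.
Qed.

Lemma affine_ge0_pos (c v t : R) : 0 < c -> (0 <= c * t + v) = (- v / c <= t).
Proof. by move=> c_gt0; rewrite ler_pdivrMr // mulrC -[in RHS]subr_ge0 opprK. Qed.

Lemma affine_ge0_neg (c v t : R) : c < 0 -> (0 <= c * t + v) = (t <= - v / c).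
Proof. by move=> c_lt0; rewrite ler_ndivlMr // mulrC -[in RHS]subr_ge0 opprK. Qed.

(* Fourier-Motzkin for one variable: a system 0 <= c_i t + v_i is solvable as
   soon as the rows with c_i = 0 hold and every lower bound is below every
   upper bound, the latter being the combinations -c_q (row p) + c_p (row q). *)
Lemma one_variable_solvable (I : finType) (c v : I -> R) :
  (forall i, c i = 0 -> 0 <= v i) ->
  (forall p q, 0 < c p -> c q < 0 -> 0 <= - c q * v p + c p * v q) ->
  exists t, forall i, 0 <= c i * t + v i.
Proof.
move=> zero_rows pair_rows; pose b i := - v i / c i.
have [p0 c_p0|no_pos] := pickP (fun p => 0 < c p).
  have [pm c_pm b_max] := @arg_maxP _ _ I p0 (fun p => 0 < c p) b c_p0.
  exists (b pm) => i; case: (ltgtP (c i) 0) => [c_i|c_i|c_i].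
  - rewrite affine_ge0_neg // -/(b i) -affine_ge0_pos //.
    have -> : c pm * b i + v pm = (- c i * v pm + c pm * v i) / - c i.
      by rewrite /b; field; rewrite lt_eqF.
    by rewrite divr_ge0 ?pair_rows // oppr_ge0 ltW.
  - by rewrite affine_ge0_pos //; apply: b_max.
  - by rewrite c_i mul0r add0r zero_rows.
exists (- \sum_j `|b j|) => i; case: (ltgtP (c i) 0) => [c_i|c_i|c_i].
- rewrite affine_ge0_neg // -/(b i) (bigD1 i) //= opprD.
  have rest_ge0 : 0 <= \sum_(j | j != i) `|b j| by apply: sumr_ge0.
  have := ler_norm (- b i); rewrite normrN; lra.
- by move: (no_pos i); rewrite c_i.
- by rewrite c_i mul0r add0r zero_rows.
Qed.

(* One elimination step of Fourier-Motzkin on the system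
   0 <= \sum_j C i j x j + D i, eliminating the variable ord0. *)
Section FourierMotzkinStep.
Variables (I : finType) (k : nat) (C : I -> 'I_k.+1 -> R) (D : I -> R).

Let c i := C i ord0.

(* Row weights of the reduced system: rows with c i = 0 are kept, and every
   pair p, q with c p > 0 > c q is combined so that the variable cancels. *)
Definition fm_weight (r : I + I * I) (i : I) : R :=
  match r with
  | inl i0 => if c i0 == 0 then (i == i0)%:R else 0
  | inr (p, q) => if (0 < c p) && (c q < 0)
                  then (i == p)%:R * - c q + (i == q)%:R * c p else 0
  end.

Lemma fm_weight_inl i0 (f : I -> R) :
  \sum_i fm_weight (inl i0) i * f i = if c i0 == 0 then f i0 else 0.
Proof.
rewrite /fm_weight; case: ifP => _; first exact: sum_indicator.
by rewrite big1 // => i _; rewrite mul0r.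
Qed.

Lemma fm_weight_inr p q (f : I -> R) :
  \sum_i fm_weight (inr (p, q)) i * f i =
  if (0 < c p) && (c q < 0) then - c q * f p + c p * f q else 0.
Proof.
rewrite /fm_weight; case: ifP => _; last by rewrite big1 // => i _; rewrite mul0r.
under eq_bigr do rewrite mulrDl -!mulrA.
by rewrite big_split /= !sum_indicator.
Qed.

Lemma fm_weight_ge0 r i : 0 <= fm_weight r i.
Proof.
case: r => [i0|[p q]] /=; first by case: ifP.
case: andP => // -[c_p c_q].
by apply: addr_ge0; apply: mulr_ge0; rewrite ?ler0n ?oppr_ge0 ?ltW.
Qed.

Lemma fm_weight_elim r : \sum_i fm_weight r i * c i = 0.
Proof.
case: r => [i0|[p q]]; first by rewrite fm_weight_inl; case: eqP.
by rewrite fm_weight_inr; case: ifP => // _; rewrite mulNr mulrC addNr.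
Qed.

Definition fm_C (r : I + I * I) (j : 'I_k) : R :=
  \sum_i fm_weight r i * C i (lift ord0 j).
Definition fm_D (r : I + I * I) : R := \sum_i fm_weight r i * D i.

Lemma fm_certificate (l : I + I * I -> R) :
  (forall r, 0 <= l r) -> (forall j, \sum_r l r * fm_C r j = 0) ->
  \sum_r l r * fm_D r < 0 ->
  exists l' : I -> R, [/\ forall i, 0 <= l' i,
    forall j, \sum_i l' i * C i j = 0 & \sum_i l' i * D i < 0].
Proof.
move=> l_ge0 l_C l_D; exists (fun i => \sum_r l r * fm_weight r i); split.
- by move=> i; apply: sumr_ge0 => r _; rewrite mulr_ge0 ?fm_weight_ge0.
- move=> j; rewrite sum_comb; have [j' ->|->] := unliftP ord0 j; first exact: l_C.
  by rewrite big1 // => r _; rewrite fm_weight_elim mulr0.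
- by rewrite sum_comb.
Qed.

Lemma fm_solution (x : 'I_k -> R) :
  (forall r, 0 <= \sum_j fm_C r j * x j + fm_D r) ->
  exists y : 'I_k.+1 -> R, forall i, 0 <= \sum_j C i j * y j + D i.
Proof.
move=> x_sol; pose v i := \sum_j C i (lift ord0 j) * x j + D i.
have reduced r : \sum_j fm_C r j * x j + fm_D r = \sum_i fm_weight r i * v i.
  rewrite /fm_C (sum_comb (fm_weight r) (fun i j => C i (lift ord0 j))) /fm_D.
  by rewrite -big_split; apply: eq_bigr => i _; rewrite mulrDr.
have [t t_sol] : exists t, forall i, 0 <= c i * t + v i.
  apply: one_variable_solvable => [i c_i|p q c_p c_q].
    by have := x_sol (inl i); rewrite reduced fm_weight_inl c_i eqxx.
  by have := x_sol (inr (p, q)); rewrite reduced fm_weight_inr c_p c_q.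
exists (fun j => if unlift ord0 j is Some j' then x j' else t) => i.
rewrite big_ord_recl unlift_none; under eq_bigr do rewrite liftK.
by rewrite -addrA; apply: t_sol.
Qed.

End FourierMotzkinStep.

Lemma farkas_ord (k : nat) (I : finType) (C : I -> 'I_k -> R) (D : I -> R) :
  (exists x : 'I_k -> R, forall i, 0 <= \sum_j C i j * x j + D i) \/
  (exists l : I -> R, [/\ forall i, 0 <= l i,
     forall j, \sum_i l i * C i j = 0 & \sum_i l i * D i < 0]).
Proof.
elim: k I C D => [|k IH] I C D.
  have [D_ge0|/forallPn[i0]] := boolP [forall i, 0 <= D i].
    by left; exists (fun _ => 0) => i; rewrite big_ord0 add0r (forallP D_ge0).
  rewrite -ltNge => D_i0; right; exists (fun i => (i == i0)%:R).
  by split=> [i||]; [rewrite ler0n | case | rewrite sum_indicator].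
have [[x x_sol]|[l [l_ge0 l_C l_D]]] := IH _ (fm_C C) (fm_D C D).
  by left; apply: fm_solution x_sol.
by right; apply: fm_certificate l_ge0 l_C l_D.
Qed.

Lemma farkas (I J : finType) (C : I -> J -> R) (D : I -> R) :
  (exists x : J -> R, forall i, 0 <= \sum_j C i j * x j + D i) \/
  (exists l : I -> R, [/\ forall i, 0 <= l i,
     forall j, \sum_i l i * C i j = 0 & \sum_i l i * D i < 0]).
Proof.
have sum_rank (G : 'I_#|J| -> R) : \sum_v G v = \sum_j G (enum_rank j).
  by rewrite (reindex enum_rank) //; apply: onW_bij; apply: enum_rank_bij.
have [[x x_sol]|[l [l_ge0 l_C l_D]]] :=
  farkas_ord (fun i (v : 'I_#|J|) => C i (enum_val v)) D.
  left; exists (fun j => x (enum_rank j)) => i.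
  by have := x_sol i; rewrite sum_rank; under eq_bigr do rewrite enum_rankK.
by right; exists l; split=> // j; have := l_C (enum_rank j); rewrite enum_rankK.
Qed.

Lemma ville (I J : finType) (A : I -> J -> R) :
  (forall y : I -> R, (forall i, 0 <= y i) ->
     exists j, 0 <= \sum_i y i * A i j) ->
  exists x : J -> R, is_prob x /\ forall i, 0 <= \sum_j A i j * x j.
Proof.
move=> good_column.
pose C (r : (J + bool) + I) (j : J) : R :=
  match r with
  | inl (inl j') => (j' == j)%:R
  | inl (inr b) => if b then 1 else -1
  | inr i => A i j
  end.
pose D (r : (J + bool) + I) : R :=
  match r with inl (inr b) => if b then -1 else 1 | _ => 0 end.
have [[x x_sol]|[l [l_ge0 l_C l_D]]] := farkas C D.
  exists x; split; [split|] => [j||i].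
  - have := x_sol (inl (inl j)); under eq_bigr do rewrite /= eq_sym.
    by rewrite sum_indicator addr0.
  - have := x_sol (inl (inr true)); have := x_sol (inl (inr false)) => /=.
    under eq_bigr do rewrite mulN1r; under [in X in _ -> X]eq_bigr do rewrite mul1r.
    rewrite sumrN; lra.
  - by have := x_sol (inr i); rewrite addr0.
have [j0 j0_ge0] := good_column (fun i => l (inr i)) (fun i => l_ge0 (inr i)).
have total : l (inl (inr false)) < l (inl (inr true)).
  move: l_D; rewrite !big_sumType big_bool /= !big1 => [|i _|j _];
    rewrite ?mulr0 //; lra.
have pick_j0 : \sum_j l (inl (inl j)) * (j == j0)%:R = l (inl (inl j0)).
  by under eq_bigr do rewrite mulrC; apply: sum_indicator.
have := l_C j0; rewrite !big_sumType big_bool /= pick_j0.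
have := l_ge0 (inl (inl j0)); lra.
Qed.

(* The dual condition of Ville's theorem holds at a state minimising
   the potential of the dual variables. *)
Lemma stationary_distribution (T : finType) (t0 : T) (w : T -> T -> R) :
  (forall a b, 0 <= w a b) ->
  exists q : T -> R, is_prob q /\
    forall b, \sum_a q a * w a b = q b * \sum_a w b a.
Proof.
move=> w_ge0; pose out b := \sum_a w b a.
pose M b a := w a b - (a == b)%:R * out b.
have M_apply (x : T -> R) b :
    \sum_a M b a * x a = \sum_a x a * w a b - x b * out b.
  under eq_bigr do rewrite mulrBl -mulrA.
  rewrite sumrB sum_indicator [out b * _]mulrC; congr (_ - _).
  by apply: eq_bigr => a _; rewrite mulrC.
have M_potential (z : T -> R) a :
    \sum_b z b * M b a = \sum_b w a b * (z b - z a).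
  under eq_bigr do rewrite mulrBr mulrCA eq_sym.
  under [RHS]eq_bigr do rewrite mulrBr.
  rewrite !sumrB sum_indicator -mulr_suml [z a * _]mulrC; congr (_ - _).
  by apply: eq_bigr => b _; rewrite mulrC.
pose A (r : bool * T) a := (if r.1 then 1 else -1) * M r.2 a.
have [y y_ge0|q [q_prob q_A]] := @ville _ _ A; last first.
  exists q; split=> // b; have := q_A (true, b); have := q_A (false, b).
  under eq_bigr do rewrite /A /= mulN1r mulNr.
  under [in X in _ -> X]eq_bigr do rewrite /A /= mul1r.
  rewrite sumrN M_apply -/(out b) => flow_le0 flow_ge0.
  apply/eqP; rewrite -subr_eq0 eq_le.
  by apply/andP; split; lra.
pose z b := y (true, b) - y (false, b).
have [a _ a_min] := @arg_minP _ _ T t0 predT z isT.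
exists a; have -> : \sum_r y r * A r a = \sum_b z b * M b a.
  transitivity (\sum_(s : bool) \sum_b y (s, b) * A (s, b) a).
    by rewrite pair_bigA; apply: eq_bigr => -[].
  rewrite big_bool -big_split; apply: eq_bigr => b _; rewrite /A /z /=; ring.
rewrite M_potential; apply: sumr_ge0 => b _.
by rewrite mulr_ge0 ?w_ge0 // subr_ge0 a_min.
Qed.

Lemma is_prob_pos (T : finType) (q : T -> R) : is_prob q -> exists t, 0 < q t.
Proof.
move=> [q_ge0 q_sum]; have [t q_t|q_le0] := pickP (fun t => 0 < q t).
  by exists t.
have : \sum_t q t <= 0 by apply: sumr_le0 => t _; rewrite leNgt q_le0.
by rewrite q_sum ler10.
Qed.

Lemma exists_ge0_of_average (T : finType) (z V : T -> R) (t0 : T) :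
  (forall t, 0 <= z t) -> 0 < z t0 -> 0 <= \sum_t z t * V t ->
  exists t, 0 <= V t.
Proof.
move=> z_ge0 z_t0 avg_ge0; have [t V_t|V_lt0] := pickP (fun t => 0 <= V t).
  by exists t.
have neg t : V t < 0 by rewrite ltNge V_lt0.
suff : \sum_t z t * V t < 0 by rewrite ltNge avg_ge0.
have head : z t0 * V t0 < 0 by rewrite pmulr_rlt0.
have rest : \sum_(t | t != t0) z t * V t <= 0.
  by apply: sumr_le0 => t _; rewrite mulr_ge0_le0 // ltW.
rewrite (bigD1 t0) //=; lra.
Qed.

End LinearInequalities.

Section Deviations.
Set Implicit Arguments. Unset Strict Implicit. Unset Printing Implicit Defensive.

Variables (n : nat) (S : 'I_n -> finType).

Lemma dev_at (s : profile S) p (a : S p) : dev s a p = a.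
Proof. by rewrite ffunE dfwith_in. Qed.

Lemma dev_out (s : profile S) p (a : S p) q : p != q -> dev s a q = s q.
Proof. by move=> neq_pq; rewrite ffunE dfwith_out. Qed.

Lemma dev_dev (s : profile S) p (a b : S p) : dev (dev s a) b = dev s b.
Proof.
apply/ffunP => q; have [<-|neq_pq] := eqVneq p q; first by rewrite !dev_at.
by rewrite !dev_out.
Qed.

Lemma dev_self (s : profile S) p : dev s (s p) = s.
Proof.
apply/ffunP => q; have [<-|neq_pq] := eqVneq p q; first by rewrite dev_at.
by rewrite dev_out.
Qed.

(* (t, b) |-> (t with p playing b, t p) is an involution of profiles x S p;
   it exchanges the played strategy of p with the deviation. *)
Lemma sum_dev_swap (R : realFieldType) p (G : profile S -> S p -> R) :
  \sum_s \sum_(b : S p) G s b = \sum_t \sum_(b : S p) G (dev t b) (t p).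
Proof.
pose swap (tb : profile S * S p) := (dev tb.1 tb.2, tb.1 p).
have swapK : involutive swap.
  by move=> [t b]; rewrite /swap /= dev_dev dev_self dev_at.
rewrite !pair_bigA (reindex swap) //; exact: onW_bij (inv_bij swapK).
Qed.

End Deviations.

Section CorrelatedEquilibria.
Set Implicit Arguments. Unset Strict Implicit. Unset Printing Implicit Defensive.

Variables (R : realFieldType) (n : nat) (S : 'I_n -> finType).
Variable u : 'I_n -> profile S -> R.

Lemma inCE_P_sub (P Q : {set 'I_n}) (z : profile S -> R) :
  Q \subset P -> inCE_P u P z -> inCE_P u Q z.
Proof. by move=> /subsetP QP [z_dist z_CE]; split=> // q /QP; apply: z_CE. Qed.

Definition prod_dist (q : forall p, S p -> R) (s : profile S) : R :=
  \prod_p q p (s p).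

Lemma prod_dist_dev (q : forall p, S p -> R) (t : profile S) p (b : S p) :
  prod_dist q (dev t b) = q p b * \prod_(j | j != p) q j (t j).
Proof.
rewrite /prod_dist (bigD1 p) //= dev_at; congr (_ * _).
by apply: eq_bigr => j neq_jp; rewrite dev_out // eq_sym.
Qed.

Lemma hart_schmeidler (q : forall p, S p -> R) p (Y : S p -> S p -> R) :
  (forall b, \sum_a q p a * Y a b = q p b * \sum_a Y b a) ->
  \sum_s prod_dist q s * \sum_(b : S p) Y (s p) b * (u p s - u p (dev s b)) = 0.
Proof.
move=> stationary; pose rest (t : profile S) := \prod_(j | j != p) q j (t j).
have inflow : \sum_s \sum_(b : S p) prod_dist q s * Y (s p) b * u p (dev s b) =
    \sum_t rest t * u p t * \sum_a q p a * Y a (t p).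
  rewrite sum_dev_swap; apply: eq_bigr => t _; rewrite mulr_sumr.
  apply: eq_bigr => b _; rewrite prod_dist_dev dev_at dev_dev dev_self /rest; ring.
have outflow : \sum_s \sum_(b : S p) prod_dist q s * Y (s p) b * u p s =
    \sum_t rest t * u p t * (q p (t p) * \sum_b Y (t p) b).
  apply: eq_bigr => t _; have := prod_dist_dev q t (t p); rewrite dev_self => ->.
  rewrite !mulr_sumr; apply: eq_bigr => b _; rewrite /rest; ring.
have balance : \sum_t rest t * u p t * (q p (t p) * \sum_b Y (t p) b) =
    \sum_t rest t * u p t * \sum_a q p a * Y a (t p).
  by apply: eq_bigr => t _; rewrite stationary.
rewrite -[RHS](subrr (\sum_t rest t * u p t * \sum_a q p a * Y a (t p))).
rewrite -[X in X - _]balance -outflow -inflow -sumrB; apply: eq_bigr => s _.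
by rewrite mulr_sumr -sumrB; apply: eq_bigr => b _; ring.
Qed.

(* Rows of the correlated-equilibrium system: player p and a switch a -> b. *)
Definition switch := {p : 'I_n & (S p * S p)%type}.
Definition switch_of p (a b : S p) : switch :=
  Tagged (fun q => (S q * S q)%type) (a, b).

Definition switch_gain (r : switch) (s : profile S) : R :=
  let p := tag r in
  if s p == (tagged r).1 then u p s - u p (dev s (tagged r).2) else 0.

Lemma inCE_switch_gain (z : profile S -> R) :
  is_prob z -> (forall r, 0 <= \sum_s switch_gain r s * z s) ->
  inCE_P u setT z.
Proof.
move=> z_prob gain_ge0; split=> // p _ a a' _.
suff -> : \sum_(s : profile S | s p == a) z s * (u p s - u p (dev s a')) =
          \sum_s switch_gain (switch_of a a') s * z s by [].
rewrite big_mkcond; apply: eq_bigr => s _; rewrite /switch_gain /=.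
by case: ifP; rewrite ?mul0r // mulrC.
Qed.

Lemma sum_switch_gain (y : switch -> R) (s : profile S) :
  \sum_r y r * switch_gain r s =
  \sum_p \sum_(b : S p) y (switch_of (s p) b) * (u p s - u p (dev s b)).
Proof.
transitivity (\sum_p \sum_(ab : S p * S p)
    y (switch_of ab.1 ab.2) * switch_gain (switch_of ab.1 ab.2) s).
  by rewrite sig_big_dep; apply: eq_bigr => -[p [a b]].
apply: eq_bigr => p _.
rewrite -(pair_bigA _ (fun a b => y (switch_of a b) * switch_gain (switch_of a b) s)).
rewrite (bigD1 (s p)) //= [X in _ + X]big1 ?addr0 => [|a not_sp].
  by apply: eq_bigr => b _; rewrite /switch_gain /= eqxx.
by apply: big1 => b _; rewrite /switch_gain /= eq_sym (negbTE not_sp) mulr0.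
Qed.

(* By Ville's
   theorem it suffices that for every nonnegative weighting y of the switches
   some profile has nonnegative y-weighted gain; the product of stationary
   distributions of the switch rates y averages this gain to zero. *)
Lemma correlated_equilibrium_exists :
  (forall p, 0 < #|S p|)%N -> exists z, inCE_P u setT z.
Proof.
move=> nonempty.
have [y y_ge0|z [z_prob z_gain]] := @ville R switch (profile S) switch_gain; last first.
  by exists z; apply: inCE_switch_gain.
have stat p : exists q : S p -> R, is_prob q /\
    forall b, \sum_a q a * y (switch_of a b) = q b * \sum_a y (switch_of b a).
  have [t0 _] := card_gt0P (nonempty p).
  by apply: (stationary_distribution t0) => a b; apply: y_ge0.
have [q q_stat] := fin_all_exists stat.
have [s0 q_s0] : exists s0 : profile S, 0 < prod_dist q s0.
  have [a a_pos] := fin_all_exists (fun p => is_prob_pos (q_stat p).1).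
  by exists [ffun p => a p]; apply: prodr_gt0 => p _; rewrite ffunE.
apply: (exists_ge0_of_average (z := prod_dist q) _ q_s0) => [s|].
  by apply: prodr_ge0 => p _; apply: (q_stat p).1.1.
under eq_bigr do rewrite sum_switch_gain mulr_sumr.
rewrite exchange_big big1 // => p _; exact: hart_schmeidler (q_stat p).2.
Qed.

End CorrelatedEquilibria.

Section Commitment.
Set Implicit Arguments. Unset Strict Implicit. Unset Printing Implicit Defensive.

Variables (R : realFieldType) (n : nat) (S : 'I_n -> finType).
Variable u : 'I_n -> profile S -> R.

Definition push (G : profile S -> profile S) (x : profile S -> R)
  (t : profile S) : R :=
  \sum_s x s * (G s == t)%:R.

Lemma sum_push (G : profile S -> profile S) (x f : profile S -> R) :
  \sum_t push G x t * f t = \sum_s x s * f (G s).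
Proof.
under eq_bigr do rewrite mulr_suml.
rewrite exchange_big; apply: eq_bigr => s _.
under eq_bigr do rewrite -mulrA; rewrite -mulr_sumr.
by congr (_ * _); under eq_bigr do rewrite eq_sym; rewrite sum_indicator.
Qed.

Definition commit p (a : S p) (x : profile S -> R) : profile S -> R :=
  push (fun s => dev s a) x.

Lemma EU_commit p (a : S p) x :
  EU u p (commit a x) = \sum_s x s * u p (dev s a).
Proof. exact: sum_push. Qed.

Lemma commit_dist p (a : S p) x : is_dist x -> is_dist (commit a x).
Proof.
move=> [x_ge0 x_sum]; split=> [t|].
  by apply: sumr_ge0 => s _; rewrite mulr_ge0 ?ler0n.
transitivity (\sum_s x s * 1); last by under eq_bigr do rewrite mulr1.
rewrite -(sum_push (fun s => dev s a) _ (fun=> 1)).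
by under [RHS]eq_bigr do rewrite mulr1.
Qed.

Lemma commit_CE p (a : S p) x :
  is_dist x -> (forall b : S p, EU u p (commit b x) <= EU u p (commit a x)) ->
  inCE_P u [set p] (commit a x).
Proof.
move=> x_dist a_best; split; first exact: commit_dist.
move=> q; rewrite in_set1 => /eqP -> a1 a' _; rewrite big_mkcond /=.
have -> : \sum_(t : profile S)
      (if t p == a1 then commit a x t * (u p t - u p (dev t a')) else 0) =
    \sum_t commit a x t * (if t p == a1 then u p t - u p (dev t a') else 0).
  by apply: eq_bigr => t _; case: ifP; rewrite ?mulr0.
rewrite sum_push; under eq_bigr do rewrite dev_at dev_dev.
case: (a == a1); last by rewrite big1 // => s _; rewrite mulr0.
under eq_bigr do rewrite mulrBr.
by rewrite sumrB -!EU_commit subr_ge0.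
Qed.

Lemma best_commitment p x : (0 < #|S p|)%N ->
  exists a : S p, forall b : S p, EU u p (commit b x) <= EU u p (commit a x).
Proof.
case/card_gt0P=> a0 _.
have [a _ a_max] :=
  @arg_maxP _ _ (S p) a0 predT (fun b => EU u p (commit b x)) isT.
by exists a => b; apply: a_max.
Qed.

Lemma commit_CCE_payoff p (a : S p) x :
  inCCE u x -> EU u p (commit a x) <= EU u p x.
Proof.
move=> [_ cce]; have := cce p a; under eq_bigr do rewrite mulrBr.
by rewrite sumrB subr_ge0 EU_commit.
Qed.

End Commitment.

Theorem mainTheorem17 (R : realFieldType) (n : nat) (S : 'I_n -> finType)
  (hS : forall p : 'I_n, (0 < #|S p|)%N)
  (u : 'I_n -> profile S -> R) (x : profile S -> R) :
  inCCE u x -> inSNF u x.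
Proof.
move=> x_cce; have [ce ce_CE] := correlated_equilibrium_exists u hS.
have [best best_commit] :=
  fin_all_exists (fun p => best_commitment u x (hS p)).
exists (fun pi => match pi with
                  | [::] => x
                  | [:: p] => commit (best p) x
                  | _ => ce end).
split=> //; split=> [[|p [|p' pi]] _ _|p _ _] /=.
- by split=> [|q]; [case: x_cce | rewrite !inE].
- apply: inCE_P_sub (commit_CE x_cce.1 (best_commit p)).
  by apply/subsetP => q; rewrite !inE orbF.
- by apply: inCE_P_sub ce_CE; apply: subsetT.
- exact: commit_CCE_payoff.
Qed.
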